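(* Let $p^{(0)}\in[0,1]^n$ and let $p^{(1)},p^{(2)},p^{(3)},\dots$ be random vectors in $[0,1]^n$ such that for every $h\ge1$, conditionally on $(p^{(0)},\dots,p^{(h-1)})$, the vector $p^{(h)}$ is a probabilistic aggregate of $p^{(h-1)}$. Then: (1) for every $h\ge 0$ and every $i$, if $p^{(h)}_i\in\{0,1\}$ then $p^{(h+1)}_i=p^{(h)}_i$ almost surely; consequently, along the sequence any entry that has been set to $0$ or $1$ remains set, and the number of positive entries of $p^{(h+1)}$ is at most that of $p^{(h)}$; (2) (transitivity) for all $0\le h_1<h_2$, conditionally on $(p^{(0)},\dots,p^{(h_1)})$, the vector $p^{(h_2)}$ is a probabilistic aggregate of $p^{(h_1)}$.
   Context: A random vector $q\in[0,1]^n$ is a probabilistic aggregate of a vector $r\in[0,1]^n$ if: (i) $\mathbb{E}[q_i]=r_i$ for all $i$; (ii) $\sum_i q_i=\sum_i r_i$ (with probability one); (iii) for every $J\subseteq[n]$, $\mathbb{E}\big[\prod_{i\in J}q_i\big]\le\prod_{i\in J}r_i$ and $\mathbb{E}\big[\prod_{i\in J}(1-q_i)\big]\le\prod_{i\in J}(1-r_i)$. *)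

From HB Require Import structures.
From mathcomp Require Import all_boot all_order all_algebra.
From mathcomp Require Import all_classical all_reals all_analysis.
Set Implicit Arguments. Unset Strict Implicit. Unset Printing Implicit Defensive.
Import Order.TTheory GRing.Theory Num.Theory.
Local Open Scope classical_set_scope.
Local Open Scope ring_scope.

Definition hist_gen (d : measure_display) (T : measurableType d) (R : realType)
  (n : nat) (p : nat -> 'I_n -> T -> R) (h : nat) : set (set T) :=
  [set A | exists k (i : 'I_n) (B : set R),
      (k <= h)%N /\ measurable B /\ A = p k i @^-1` B].

Definition history (d : measure_display) (T : measurableType d) (R : realType)
  (n : nat) (p : nat -> 'I_n -> T -> R) (h : nat) : set (set T) :=
  <<s hist_gen p h >>.

(* Conditional expectations
   are expressed through their defining property: E[X | G] <= Y (resp. = Y) for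
   G-measurable Y iff E[X 1_A] <= E[Y 1_A] (resp. =) for all A in G. *)
Definition cond_prob_aggregate (d : measure_display) (T : measurableType d)
  (R : realType) (P : probability T R) (n : nat) (G : set (set T))
  (q r : 'I_n -> T -> R) : Prop :=
  [/\ (forall i t, 0 <= q i t <= 1),
      (forall (A : set T) (i : 'I_n), G A ->
         (\int[P]_(x in A) (q i x)%:E = \int[P]_(x in A) (r i x)%:E)%E),
      (\forall x \ae P, \sum_(i < n) q i x = \sum_(i < n) r i x),
      (forall (A : set T) (J : {set 'I_n}), G A ->
         (\int[P]_(x in A) (\prod_(i in J) q i x)%:E
            <= \int[P]_(x in A) (\prod_(i in J) r i x)%:E)%E)
    & (forall (A : set T) (J : {set 'I_n}), G A ->
         (\int[P]_(x in A) (\prod_(i in J) (1 - q i x))%:E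
            <= \int[P]_(x in A) (\prod_(i in J) (1 - r i x))%:E)%E)].

(** The aggregate conditions are tested on events of the conditioning
    sigma-algebra, and the events [{p^(h)_i = 0}] and [{p^(h)_i = 1}] belong to
    it.  Taking [J = {i}] and [A = {p^(h)_i = 0}] in the product condition gives
    [E[p^(h+1)_i 1_A] <= 0], so the nonnegative [p^(h+1)_i] vanishes a.s. on
    [A]; symmetrically with [1 - p^(h+1)_i] on [{p^(h)_i = 1}].  Transitivity
    holds because the histories increase with [h], so every condition at level
    [h1] can be chained through the conditions at the intermediate levels. *)
From HB Require Import structures.
From mathcomp Require Import all_boot all_order all_algebra.
From mathcomp Require Import all_classical all_reals all_analysis.
From mathcomp Require Import measurable_realfun.
Set Implicit Arguments. Unset Strict Implicit. Unset Printing Implicit Defensive.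
Import Order.TTheory GRing.Theory Num.Theory.
Local Open Scope classical_set_scope.
Local Open Scope ring_scope.

Definition keeps_set_entries (R : realType) (n : nat) (r q : 'I_n -> R) :=
  forall i, (r i = 0 -> q i = 0) /\ (r i = 1 -> q i = 1).

Lemma keeps_set_entries_trans (R : realType) (n : nat) (r s q : 'I_n -> R) :
  keeps_set_entries r s -> keeps_set_entries s q -> keeps_set_entries r q.
Proof.
move=> rs sq i; have [s0 s1] := rs i; have [q0 q1] := sq i.
by split=> [/s0/q0|/s1/q1].
Qed.

Lemma keeps_set_entries_card_pos (R : realType) (n : nat) (r q : 'I_n -> R) :
  (forall i, 0 <= r i) -> keeps_set_entries r q ->
  (#|[pred i | (0 < q i)%R]| <= #|[pred i | (0 < r i)%R]|)%N.
Proof.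
move=> r_ge0 rq; apply: subset_leq_card; apply/fintype.subsetP => i.
rewrite !inE => q_gt0; rewrite lt_neqAle r_ge0 andbT; apply/eqP => /esym r0.
by move: q_gt0; rewrite (proj1 (rq i) r0) ltxx.
Qed.

Section ProbabilisticAggregate.
Variables (d : measure_display) (T : measurableType d) (R : realType)
  (P : probability T R).

Lemma integral_le0_ae_eq0 (A : set T) (f : T -> R) : measurable A ->
  measurable_fun setT f -> (forall x, 0 <= f x) ->
  (\int[P]_(x in A) (f x)%:E <= 0)%E -> \forall x \ae P, A x -> f x = 0.
Proof.
move=> mA mf f_ge0 int_le0.
have mfA : measurable_fun A (EFin \o f).
  by apply/measurable_EFinP; apply: measurable_funS mf.
have int_eq0 : (\int[P]_(x in A) (f x)%:E = 0)%E.
  by apply/eqP; rewrite eq_le int_le0 integral_ge0// => x _; rewrite lee_fin.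
have : (\int[P]_(x in A) `|(f x)%:E| = 0)%E.
  by rewrite -int_eq0; apply: eq_integral => x _; rewrite gee0_abs// lee_fin.
move/(ae_eq_integral_abs P mA mfA); apply: filterS => x /[apply].
by case.
Qed.

Variables (n : nat) (G : set (set T)) (q r : 'I_n -> T -> R).
Hypothesis qr : cond_prob_aggregate P G q r.

Lemma integral_singleton_prod (f : 'I_n -> T -> R) (i : 'I_n) (A : set T) :
  (\int[P]_(x in A) (\prod_(j in [set i]%SET) f j x)%:E
   = \int[P]_(x in A) (f i x)%:E)%E.
Proof. by apply: eq_integral => x _; rewrite big_set1. Qed.

Lemma cond_prob_aggregate_keeps0 (i : 'I_n) :
  measurable_fun setT (q i) -> measurable (r i @^-1` [set 0]) ->
  G (r i @^-1` [set 0]) -> \forall x \ae P, r i x = 0 -> q i x = 0.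
Proof.
have [q01 _ _ q_prod _] := qr; move=> mq mA GA.
apply: integral_le0_ae_eq0 => // [x|]; first by have /andP[] := q01 i x.
have := q_prod _ [set i]%SET GA.
rewrite !integral_singleton_prod => /le_trans; apply.
by rewrite (eq_integral (fun=> 0%E)) ?integral0// => x /set_mem /= ->.
Qed.

Lemma cond_prob_aggregate_keeps1 (i : 'I_n) :
  measurable_fun setT (q i) -> measurable (r i @^-1` [set 1]) ->
  G (r i @^-1` [set 1]) -> \forall x \ae P, r i x = 1 -> q i x = 1.
Proof.
have [q01 _ _ _ q_coprod] := qr; move=> mq mA GA.
have : \forall x \ae P, r i x = 1 -> 1 - q i x = 0.
  apply: integral_le0_ae_eq0 => // [|x|].
  - by apply: measurable_funB => //; exact: measurable_cst.
  - by have /andP[_] := q01 i x; rewrite subr_ge0.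
  have := q_coprod _ [set i]%SET GA.
  rewrite (integral_singleton_prod (fun j x => 1 - q j x)).
  rewrite (integral_singleton_prod (fun j x => 1 - r j x)) => /le_trans; apply.
  by rewrite (eq_integral (fun=> 0%E)) ?integral0// => x /set_mem /= ->; rewrite subrr.
by apply: filterS => x qx1 /qx1 /eqP; rewrite subr_eq0 => /eqP <-.
Qed.

Lemma cond_prob_aggregate_trans (G' : set (set T)) (s : 'I_n -> T -> R) :
  G' `<=` G -> cond_prob_aggregate P G' r s -> cond_prob_aggregate P G' q s.
Proof.
move=> G'G [_ r_mean r_sum r_prod r_coprod].
have [q01 q_mean q_sum q_prod q_coprod] := qr.
split=> // [A i G'A|||].
- by rewrite q_mean ?r_mean//; exact: G'G.
- by apply: filterS2 q_sum r_sum => x -> ->.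
- by move=> A J G'A; apply: le_trans (r_prod A J G'A); exact: q_prod (G'G _ G'A).
- move=> A J G'A; apply: le_trans (r_coprod A J G'A).
  exact: q_coprod (G'G _ G'A).
Qed.

End ProbabilisticAggregate.

Section AggregateSequence.
Variables (d : measure_display) (T : measurableType d) (R : realType)
  (P : probability T R) (n : nat) (p : nat -> 'I_n -> T -> R).
Hypothesis mp : forall h i, measurable_fun setT (p h i).
Hypothesis p_agg : forall h, cond_prob_aggregate P (history p h) (p h.+1) (p h).

Lemma history_mono h h' : (h <= h')%N -> history p h `<=` history p h'.
Proof.
move=> hh'; apply: sub_sigma_algebra2 => A [k [i [B [kh [mB ->]]]]].
by exists k, i, B; split => //; exact: leq_trans hh'.
Qed.

Lemma history_preimage h i (B : set R) : measurable B ->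
  history p h (p h i @^-1` B).
Proof. by move=> mB; apply: sub_sigma_algebra; exists h, i, B. Qed.

Lemma measurable_preimage h i (B : set R) : measurable B ->
  measurable (p h i @^-1` B).
Proof. by move=> mB; have := mp h i measurableT mB; rewrite setTI. Qed.

Lemma aggregate_step_keeps h i : \forall x \ae P,
  (p h i x = 0 -> p h.+1 i x = 0) /\ (p h i x = 1 -> p h.+1 i x = 1).
Proof.
have mpre c := @measurable_preimage h i _ (measurable_set1 c).
have hpre c := @history_preimage h i _ (measurable_set1 c).
apply: filterS2
  (cond_prob_aggregate_keeps0 (p_agg h) (mp h.+1 i) (mpre 0) (hpre 0))
  (cond_prob_aggregate_keeps1 (p_agg h) (mp h.+1 i) (mpre 1) (hpre 1)).
by [].
Qed.

Lemma aggregate_step_keeps_all h :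
  \forall x \ae P, keeps_set_entries (p h ^~ x) (p h.+1 ^~ x).
Proof. exact: filter_forall (aggregate_step_keeps h). Qed.

Lemma aggregate_keeps h h' : (h <= h')%N ->
  \forall x \ae P, keeps_set_entries (p h ^~ x) (p h' ^~ x).
Proof.
move=> /subnKC <-; elim: (h' - h)%N => [|k IH].
  by apply: aeW => x; rewrite addn0.
rewrite addnS; apply: filterS2 IH (aggregate_step_keeps_all (h + k)) => x.
exact: keeps_set_entries_trans.
Qed.

Lemma aggregate_trans h1 h2 : (h1 < h2)%N ->
  cond_prob_aggregate P (history p h1) (p h2) (p h1).
Proof.
move=> /subnKC <-; elim: (h2 - h1.+1)%N => [|k IH]; first by rewrite addn0.
rewrite addnS; apply: cond_prob_aggregate_trans IH => //.
apply: history_mono; exact: leq_trans (leqnSn h1) (leq_addr k _).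
Qed.

End AggregateSequence.

Theorem lemma3 (d : measure_display) (T : measurableType d) (R : realType)
  (P : probability T R) (n : nat) (p0 : 'I_n -> R)
  (p : nat -> 'I_n -> T -> R) :
  (forall i, 0 <= p0 i <= 1) ->
  (forall i t, p 0%N i t = p0 i) ->
  (forall h i, measurable_fun setT (p h i)) ->
  (forall h i t, 0 <= p h i t <= 1) ->
  (forall h, cond_prob_aggregate P (history p h) (p h.+1) (p h)) ->
  [/\ (forall h (i : 'I_n), \forall x \ae P,
          (p h i x = 0 -> p h.+1 i x = 0) /\ (p h i x = 1 -> p h.+1 i x = 1)),
      (forall h h', (h <= h')%N -> \forall x \ae P, forall i : 'I_n,
          (p h i x = 0 -> p h' i x = 0) /\ (p h i x = 1 -> p h' i x = 1)),
      (forall h, \forall x \ae P,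
          (#|[pred i : 'I_n | (0 < p h.+1 i x)%R]| <= #|[pred i : 'I_n | (0 < p h i x)%R]|)%N)
    & (forall h1 h2, (h1 < h2)%N ->
          cond_prob_aggregate P (history p h1) (p h2) (p h1))].
Proof.
move=> _ _ mp p01 p_agg; split.
- exact: aggregate_step_keeps.
- exact: aggregate_keeps.
- move=> h; apply: filterS (aggregate_step_keeps_all mp p_agg h) => x.
  by apply: keeps_set_entries_card_pos => i; have /andP[] := p01 h i x.
- exact: aggregate_trans.
Qed.
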